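(* Let $M$ be a complete pointed metric space, $k\in\mathbb N$, and let $(\gamma_n)_n=\big(\sum_{i=1}^k a_i(n)\delta(x_i(n))\big)_n\subset\mathcal{FS}_k(M)$ (with $a_i(n)\in\mathbb K$, $x_i(n)\in M$) be a sequence converging weakly to an element $\gamma\in\mathcal{FS}_k(M)$. Then for every $p\in\mathrm{supp}(\gamma)$ there exists $1\le m\le k$ such that $\liminf_{n\to\infty} d(x_m(n),p)=0$.
   Context: Scalars are $\mathbb K=\mathbb R$ or $\mathbb C$. For a pointed metric space $(M,d,0_M)$, $\mathrm{Lip}_0(M)$ denotes the Banach space of Lipschitz functions $g\colon M\to\mathbb K$ with $g(0_M)=0$ normed by the best Lipschitz constant; $\delta(x)\in\mathrm{Lip}_0(M)^*$ is evaluation at $x$ (note $\delta(0_M)=0$); the Lipschitz-free space $\mathcal F(M)$ is the norm-closed linear span of $\{\delta(x):x\in M\}$ in $\mathrm{Lip}_0(M)^*$, with dual $\mathrm{Lip}_0(M)$. For a closed $K\subset M$ with $0_M\in K$, $\mathcal F(K)$ is identified with the closed span of $\{\delta(x):x\in K\}$ in $\mathcal F(M)$. The support $\mathrm{supp}(\gamma)$ of $\gamma\in\mathcal F(M)$ is the smallest closed $K\subset M$ with $\gamma\in\mathcal F(K)$. $\mathcal{FS}_k(M)$ is the set of $\gamma\in\mathcal F(M)$ whose support is finite with at most $k$ points; equivalently $\gamma=\sum_{i=1}^k a_i\delta(x_i)$. *)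

From HB Require Import structures.
From mathcomp Require Import all_boot all_order all_algebra.
From mathcomp Require Import all_classical all_reals all_analysis.
From mathcomp Require Import complex.
Set Implicit Arguments. Unset Strict Implicit. Unset Printing Implicit Defensive.
Import Order.TTheory GRing.Theory Num.Theory.
Import numFieldNormedType.Exports.
Local Open Scope classical_set_scope.
Local Open Scope ring_scope.

Definition Scal (R : realType) (b : bool) : numFieldType :=
  if b then (R[i] : numFieldType) else (R : numFieldType).

Definition ofR (R : realType) (b : bool) : R -> Scal R b :=
  match b as b0 return R -> Scal R b0 with
  | true => fun r => (r%:C)%C
  | false => fun r => r
  end.

Section Defs.
Variables (R : realType) (b : bool).
Local Notation K := (Scal R b).
Local Notation ι := (@ofR R b).
Variables (T : Type) (d : T -> T -> R).

Definition is_metric : Prop :=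
  [/\ forall x y, d x y = 0 <-> x = y,
      forall x y, d x y = d y x &
      forall x y z, d x z <= d x y + d y z].

Definition metric_cvg (u : nat -> T) (l : T) : Prop :=
  forall e : R, 0 < e -> exists N : nat, forall n, (N <= n)%N -> d (u n) l < e.

Definition metric_cauchy (u : nat -> T) : Prop :=
  forall e : R, 0 < e -> exists N : nat,
    forall m n, (N <= m)%N -> (N <= n)%N -> d (u m) (u n) < e.

Definition metric_complete : Prop :=
  forall u, metric_cauchy u -> exists l, metric_cvg u l.

Definition metric_closed (A : set T) : Prop :=
  forall (u : nat -> T) (l : T), (forall n, A (u n)) -> metric_cvg u l -> A l.

Definition lipschitz_with (L : R) (f : T -> K) : Prop :=
  forall x y, `|f x - f y| <= ι (L * d x y).

Variable x0 : T.

Definition Lip0 (f : T -> K) : Prop :=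
  f x0 = 0 /\ exists L : R, lipschitz_with L f.

Definition Lip0_ball (f : T -> K) : Prop := f x0 = 0 /\ lipschitz_with 1 f.

(* the action of the finitely supported element sum_i c_i delta(z_i) on f *)
Definition pairing (n : nat) (c : 'I_n -> K) (z : 'I_n -> T) (f : T -> K) : K :=
  \sum_(i < n) c i * f (z i).

(* sum_i c_i delta(z_i) belongs to F(A), the closed linear span of
   {delta(x) : x in A} in Lip_0(M)^* (dual norm) *)
Definition in_FA (A : set T) (n : nat) (c : 'I_n -> K) (z : 'I_n -> T) : Prop :=
  forall e : R, 0 < e -> exists (m : nat) (c' : 'I_m -> K) (z' : 'I_m -> T),
    (forall j, A (z' j)) /\
    forall f, Lip0_ball f -> `|pairing c z f - pairing c' z' f| <= ι e.

(* p belongs to supp(sum_i c_i delta(z_i)) = the smallest closed A with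
   the element in F(A), i.e. the intersection of all such A *)
Definition in_supp (n : nat) (c : 'I_n -> K) (z : 'I_n -> T) (p : T) : Prop :=
  forall A : set T, metric_closed A -> in_FA A c z -> A p.

(* weak convergence in F(M) (whose dual is Lip_0(M)) of
   gamma_j = sum_i a j i delta(x j i) to gamma = sum_i c_i delta(z_i) *)
Definition weak_cvg (k : nat) (a : nat -> 'I_k -> K) (x : nat -> 'I_k -> T)
  (n : nat) (c : 'I_n -> K) (z : 'I_n -> T) : Prop :=
  forall f, Lip0 f -> (fun j => pairing (a j) (x j) f) @ \oo --> pairing c z f.

End Defs.

From HB Require Import structures.
From mathcomp Require Import all_boot all_order all_algebra.
From mathcomp Require Import all_classical all_reals all_analysis.
From mathcomp Require Import complex lra.
Set Implicit Arguments. Unset Strict Implicit. Unset Printing Implicit Defensive.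
Import Order.TTheory GRing.Theory Num.Theory.
Import numFieldNormedType.Exports.
Local Open Scope classical_set_scope.
Local Open Scope ring_scope.

(* If the claim fails, every atom x_m(n) of gamma_n eventually stays at
   distance >= r > 0 from p.  Pick 0 < s <= r below the positive distances
   from p of the atoms z_i of gamma and of the base point.  The bump
   y |-> max(0, s - d(y, p)) is Lipschitz, vanishes at the base point and on
   all atoms of gamma_n for large n, so weak convergence forces gamma to vanish
   on it, i.e. the mass of gamma at p is zero (or p is the base point, where
   every f in Lip_0 vanishes anyway).  Moving that mass to any point of the
   closed set A = {y | d(y, p) >= s} leaves gamma unchanged as a functional,
   so gamma lies in F(A); then p lies in supp(gamma), a subset of A, which is
   absurd. *)

Section ScalarEmbedding.
Variables (R : realType) (b : bool).
Local Notation ι := (@ofR R b).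

Lemma ofR0 : ι 0 = 0.
Proof. by case: b. Qed.

Lemma ofRB x y : ι (x - y) = ι x - ι y.
Proof. by case: b => //=; rewrite rmorphB. Qed.

Lemma ofR_le x y : (ι x <= ι y) = (x <= y).
Proof. by case: b => //=; exact: lecR. Qed.

Lemma ofR_eq0 x : (ι x == 0) = (x == 0).
Proof. by case: b => //=; rewrite -(inj_eq (@complexI _)) rmorph0. Qed.

Lemma ofR_norm x : `|ι x| = ι `|x|.
Proof. by case: b => //=; rewrite normc_def /= expr0n /= addr0 sqrtr_sqr. Qed.

End ScalarEmbedding.

Lemma limn_einf_neq0_lbound (R : realType) (u : nat -> R) :
  (forall n, 0 <= u n) -> limn_einf (fun n => (u n)%:E) != 0%E ->
  exists2 r : R, 0 < r & \forall n \near \oo, r <= u n.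
Proof.
move=> u_ge0 liminf_neq0; set v := fun n => (u n)%:E.
have einfs_ge0 n : (0 <= einfs v n)%E.
  by apply: le_ereal_inf_tmp => _ [m _ <-]; rewrite lee_fin.
have : (0 < limn_einf v)%E.
  rewrite lt0e liminf_neq0 /= limn_einf_lim.
  by apply: lime_ge; [exact: is_cvg_einfs | exact: nearW].
rewrite limn_einf_lim (cvg_lim _ (@cvg_einfs_sup _ v)) //.
move=> /ereal_sup_gt[_ [n _ <-]].
have einfs_le m : (n <= m)%N -> (einfs v n <= (u m)%:E)%E.
  by move=> nm; apply: ereal_inf_lbound; exists m.
move: einfs_le; case: (einfs v n) => [r | | ] // einfs_le.
- by rewrite lte_fin => r_gt0; exists r => //; exists n.
- by move=> _; have := einfs_le n (leqnn n).
Qed.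

Lemma near_forall_pos_lbound (R : realType) (I : finType) (T : Type)
    (F : set_system T) (u : I -> T -> R) : Filter F ->
  (forall i, exists2 r : R, 0 < r & \forall t \near F, r <= u i t) ->
  exists2 r : R, 0 < r & \forall t \near F, forall i, r <= u i t.
Proof.
move=> FF u_lbound.
have /choice[rr rr_lbound] :
    forall i, exists r : R, 0 < r /\ \forall t \near F, r <= u i t.
  by move=> i; have [r r_gt0 ev] := u_lbound i; exists r.
exists (\big[Order.min/1]_i rr i).
  by apply: lt_bigmin => // i _; case: (rr_lbound i).
apply: filter_forall => i; apply: filterS (rr_lbound i).2 => t.
by move=> ri; apply: le_trans ri; exact: bigmin_le.
Qed.

Lemma norm_max0B (R : realType) (u v : R) :
  `|Order.max 0 u - Order.max 0 v| <= `|u - v|.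
Proof.
case: (lerP 0 u) => hu; case: (lerP 0 v) => hv.
- by [].
- by rewrite subr0 (ger0_norm hu) (ger0_norm (_ : 0 <= u - v)); lra.
- by rewrite sub0r normrN (ger0_norm hv) (ler0_norm (_ : u - v <= 0)); lra.
- by rewrite subrr normr0.
Qed.

Section MetricFacts.
Variables (R : realType) (T : Type) (d : T -> T -> R).
Hypothesis dm : is_metric d.

Lemma metric_d0 x : d x x = 0.
Proof. by case: dm => d0 _ _; apply/d0. Qed.

Lemma metric_ge0 x y : 0 <= d x y.
Proof.
by case: dm => _ dC dtri; have := dtri x y x; rewrite metric_d0 (dC y x); lra.
Qed.

Lemma metric_gt0 x y : x <> y -> 0 < d x y.
Proof.
move=> xy; rewrite lt_def metric_ge0 andbT; apply/eqP => dxy0; apply: xy.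
by case: dm => d0 _ _; apply/d0.
Qed.

Lemma metric_closed_dist_ge (p : T) (s : R) :
  metric_closed d [set y | s <= d y p].
Proof.
move=> u l Au ul; apply/ler_addgt0Pr => e e_gt0.
have [N uNl] := ul e e_gt0; have := uNl N (leqnn N); have := Au N.
by case: dm => _ _ dtri; have := dtri (u N) l p; rewrite /=; lra.
Qed.

Lemma separation_radius (I : finType) (y : I -> T) (p : T) (r : R) : 0 < r ->
  exists2 s : R, 0 < s & s <= r /\ forall i, y i <> p -> s <= d (y i) p.
Proof.
move=> r_gt0; exists (\big[Order.min/r]_(i | `[< y i <> p >]) d (y i) p).
  by apply: lt_bigmin => // i /asboolP; exact: metric_gt0.
split; first exact: bigmin_le_id.
by move=> i yip; apply: bigmin_le_cond; apply/asboolP.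
Qed.

End MetricFacts.

Section Bump.
Variables (R : realType) (b : bool) (T : Type) (d : T -> T -> R).
Hypothesis dm : is_metric d.
Variables (p : T) (s : R).

Definition bump (y : T) : Scal R b := ofR b (Order.max 0 (s - d y p)).

Lemma bump_far y : s <= d y p -> bump y = 0.
Proof. by move=> sy; rewrite /bump max_l ?ofR0 // subr_le0. Qed.

Lemma bump_center : 0 <= s -> bump p = ofR b s.
Proof. by move=> s_ge0; rewrite /bump (metric_d0 dm) subr0 max_r. Qed.

Lemma bump_lipschitz : lipschitz_with d 1 bump.
Proof.
move=> u v; rewrite /bump -ofRB ofR_norm ofR_le mul1r.
apply: le_trans (norm_max0B _ _) _; rewrite ler_norml.
case: dm => _ dC dtri; have := dtri v u p; have := dtri u v p.
by rewrite (dC v u); lra.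
Qed.

End Bump.

Section MassAtPoint.
Variables (R : realType) (b : bool) (T : Type) (d : T -> T -> R).
Local Notation K := (Scal R b).
Variables (n : nat) (c : 'I_n -> K) (z : 'I_n -> T) (p : T).

Definition mass_at : K := \sum_(i | `[< z i = p >]) c i.

(* Remove the atoms sitting at p and park their (zero) coefficients at w. *)
Definition off_coef (i : 'I_n) : K := if `[< z i = p >] then 0 else c i.
Definition off_atom (w : T) (i : 'I_n) : T := if `[< z i = p >] then w else z i.

Lemma pairing_split_mass (w : T) (f : T -> K) :
  pairing c z f = pairing off_coef (off_atom w) f + mass_at * f p.
Proof.
rewrite /pairing /mass_at mulr_suml [X in _ + X]big_mkcond -big_split.
apply: eq_bigr => i _ /=; rewrite /off_coef /off_atom.
by case: asboolP => [-> | _]; rewrite ?mul0r ?add0r ?addr0.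
Qed.

Lemma pairing_bump (s : R) : is_metric d -> 0 <= s ->
  (forall i, z i <> p -> s <= d (z i) p) ->
  pairing c z (bump b d p s) = mass_at * ofR b s.
Proof.
move=> dm s_ge0 z_far; rewrite /pairing /mass_at mulr_suml [RHS]big_mkcond.
apply: eq_bigr => i _ /=; case: asboolP => [-> | zip].
  by rewrite bump_center.
by rewrite bump_far ?mulr0 ?mul0r // z_far.
Qed.

Lemma in_FA_mass_invisible (x0 : T) (A : set T) :
  (forall i, z i <> p -> A (z i)) ->
  (forall f, Lip0_ball d x0 f -> mass_at * f p = 0) -> in_FA d x0 A c z.
Proof.
move=> zA mass0 e e_gt0.
have norm0_le : `|0 : K| <= ofR b e by rewrite normr0 -(ofR0 R b) ofR_le ltW.
have [[w Aw] | A0] := pselect (exists w, A w).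
  exists n, off_coef, (off_atom w); split.
    by move=> i; rewrite /off_atom; case: asboolP => // zip; exact: zA.
  by move=> f f1; rewrite (pairing_split_mass w) mass0 // addr0 subrr.
have zp i : z i = p by apply: contra_notP A0 => zip; exists (z i); exact: zA.
exists 0%N, (fun _ => 0), (fun _ => p); split; first by case.
move=> f f1; rewrite (pairing_split_mass p) mass0 // addr0 /pairing big_ord0.
by rewrite big1 ?subr0 // => i _; rewrite /off_coef asboolT ?mul0r.
Qed.

End MassAtPoint.

Lemma weak_cvg_pairing_eq0 (R : realType) (b : bool) (T : Type)
    (d : T -> T -> R) (x0 : T) (k : nat) (a : nat -> 'I_k -> Scal R b)
    (x : nat -> 'I_k -> T) (n : nat) (c : 'I_n -> Scal R b) (z : 'I_n -> T)
    (f : T -> Scal R b) :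
  weak_cvg d x0 a x c z -> Lip0 d x0 f ->
  (\forall j \near \oo, pairing (a j) (x j) f = 0) -> pairing c z f = 0.
Proof.
move=> ax_cz Lf ev0.
have cvg0 : (fun j => pairing (a j) (x j) f) @ \oo --> (0 : Scal R b).
  apply: cvg_trans (@cvg_cst _ (0 : Scal R b) nat \oo _); apply: near_eq_cvg.
  by apply: filterS ev0 => j ->.
exact: (@cvg_unique _ (@norm_hausdorff _ _) _ _ _ _ (ax_cz f Lf) cvg0).
Qed.

Theorem lemma2p2 (R : realType) (b : bool)
  (T : Type) (d : T -> T -> R) (x0 : T)
  (hmetric : is_metric d) (hcomplete : metric_complete d)
  (k : nat) (a : nat -> 'I_k -> Scal R b) (x : nat -> 'I_k -> T)
  (c : 'I_k -> Scal R b) (z : 'I_k -> T)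
  (hcvg : weak_cvg d x0 a x c z)
  (p : T) (hp : in_supp d x0 c z p) :
  exists m : 'I_k, limn_einf (fun n => (d (x n m) p)%:E) = 0%E.
Proof.
apply: contrapT => /forallNP liminf_neq0.
have [r r_gt0 x_far] : exists2 r : R, 0 < r &
    \forall n \near \oo, forall m, r <= d (x n m) p.
  apply: near_forall_pos_lbound => m; apply: limn_einf_neq0_lbound.
    by move=> n; exact: metric_ge0.
  exact/eqP/liminf_neq0.
have [s s_gt0 [s_le_r z_far]] := separation_radius hmetric
  (fun o : option 'I_k => if o is Some i then z i else x0) p r_gt0.
have p_near : ~ s <= d p p by apply/negP; rewrite (metric_d0 hmetric) -ltNge.
apply: p_near; apply: (hp [set y | s <= d y p]).
  exact: metric_closed_dist_ge.
apply: (in_FA_mass_invisible (fun i => z_far (Some i))) => f [f0 _].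
have [<- | x0p] := pselect (x0 = p); first by rewrite f0 mulr0.
suff -> : mass_at c z p = 0 by rewrite mul0r.
have bump_Lip0 : Lip0 d x0 (bump b d p s).
  split; first by apply: bump_far; exact: (z_far None).
  by exists 1; exact: bump_lipschitz.
have : pairing c z (bump b d p s) = 0.
  apply: (weak_cvg_pairing_eq0 hcvg bump_Lip0).
  apply: filterS x_far => n xn_far; rewrite /pairing big1 // => m _.
  by rewrite bump_far ?mulr0 //; exact: le_trans s_le_r (xn_far m).
rewrite (pairing_bump c hmetric (ltW s_gt0) (fun i => z_far (Some i))).
by move/eqP; rewrite mulf_eq0 ofR_eq0 (gt_eqF s_gt0) orbF => /eqP.
Qed.
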